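(* Let $k\ge1$ and let $\tilde a>0$, $b>0$. Suppose $\mathbf{x}=(x_1,x_2,x_3)\in(0,\infty)^3$ solves $$x_1=\tilde a\frac{b x_3^k+1}{x_3^k+b},\qquad x_2=\tilde a\frac{(b x_2^k+1)x_3^k}{(x_3^k+b)x_1^k},\qquad x_3=\tilde a\frac{(b x_3^k+1)x_1^k}{(x_2^k+b)x_3^k}.$$ Then $x_1=x_2=x_3$ if and only if at least one of $x_1=x_2$, $x_1=x_3$, $x_2=x_3$ holds.
   Context: In the paper, $\tilde a=e^{2\beta J/k}$ and $b=e^{2\beta J_p}$. The system describes translation-invariant boundary fields for the Ising–Vannimenus model on the Cayley tree of order $k$. *)

From mathcomp Require Import all_boot all_order all_algebra.
Set Implicit Arguments. Unset Strict Implicit. Unset Printing Implicit Defensive.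
Import Order.TTheory GRing.Theory Num.Theory.
Local Open Scope ring_scope.

(* The fixed-point system for translation-invariant boundary fields
   (x1,x2,x3) of the Ising–Vannimenus model on the Cayley tree of order k,
   with a = \tilde a = exp(2 beta J / k) and b = exp(2 beta J_p). *)
Definition IV_system (R : realFieldType) (k : nat) (a b x1 x2 x3 : R) : Prop :=
  [/\ x1 = a * ((b * x3 ^+ k + 1) / (x3 ^+ k + b)),
      x2 = a * (((b * x2 ^+ k + 1) * x3 ^+ k) / ((x3 ^+ k + b) * x1 ^+ k))
    & x3 = a * (((b * x3 ^+ k + 1) * x1 ^+ k) / ((x2 ^+ k + b) * x3 ^+ k))].

From mathcomp Require Import all_boot all_order all_algebra.
From mathcomp Require Import ring.

Set Implicit Arguments.
Unset Strict Implicit.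
Unset Printing Implicit Defensive.

Import Order.TTheory GRing.Theory Num.Theory.
Local Open Scope ring_scope.

(* Since t |-> t^k is injective on (0, oo), it suffices to compare the
   powers y_i = x_i^k. If two coordinates agree, the two corresponding
   equations of the system have equal right-hand sides; clearing the common
   factor a and the denominators leaves an identity (y - y') c = 0 with c > 0:
   - x1 = x2 gives (y1 - y3) (y3 + b) = 0,
   - x1 = x3 gives (y1 - y2) (b y1 + 1) y1 = 0,
   - x2 = x3 gives (y1 - y2) (y1 + y2) (b y2 + 1) (y2 + b) = 0. *)

Lemma eq_of_subr_mul_pos (R : numDomainType) (x y c p q : R) :
  0 < c -> (x - y) * c = p - q -> p = q -> x = y.
Proof.
move=> c_gt0 + pq; rewrite pq subrr => /eqP.
by rewrite mulf_eq0 (gt_eqF c_gt0) orbF subr_eq0 => /eqP.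
Qed.

Lemma scaled_div_eq_cross (F : fieldType) (a p q r s : F) :
  a != 0 -> q != 0 -> s != 0 -> a * (p / q) = a * (r / s) -> p * s = r * q.
Proof.
by move=> a_neq0 q_neq0 s_neq0 /(mulfI a_neq0)/eqP; rewrite eqr_div // => /eqP.
Qed.

Section IsingVannimenus.

Variables (R : realFieldType) (k : nat) (a b x1 x2 x3 : R).
Hypotheses (k_gt0 : (0 < k)%N) (a_gt0 : 0 < a) (b_gt0 : 0 < b).
Hypotheses (x1_gt0 : 0 < x1) (x2_gt0 : 0 < x2) (x3_gt0 : 0 < x3).
Hypothesis system : IV_system k a b x1 x2 x3.

Let a_neq0 : a != 0. Proof. exact: lt0r_neq0. Qed.
Let y1_gt0 : 0 < x1 ^+ k. Proof. exact: exprn_gt0. Qed.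
Let y2_gt0 : 0 < x2 ^+ k. Proof. exact: exprn_gt0. Qed.
Let y3_gt0 : 0 < x3 ^+ k. Proof. exact: exprn_gt0. Qed.

Let shift_gt0 (y : R) : 0 < y -> 0 < y + b.
Proof. by move=> y_gt0; rewrite addr_gt0. Qed.

Let affine_gt0 (y : R) : 0 < y -> 0 < b * y + 1.
Proof. by move=> y_gt0; rewrite addr_gt0 ?mulr_gt0. Qed.

Lemma IV_eq12 : x1 = x2 -> x1 = x3.
Proof.
case: system => E1 E2 _ e12; apply: (pexpIrn k_gt0); rewrite ?nnegrE ?ltW //.
have := etrans (esym E1) (etrans e12 E2); rewrite -e12.
move/(scaled_div_eq_cross a_neq0 (lt0r_neq0 (shift_gt0 y3_gt0))
        (lt0r_neq0 (mulr_gt0 (shift_gt0 y3_gt0) y1_gt0))).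
by apply: (eq_of_subr_mul_pos (shift_gt0 y3_gt0)); ring.
Qed.

Lemma IV_eq13 : x1 = x3 -> x1 = x2.
Proof.
case: system => E1 _ E3 e13; apply: (pexpIrn k_gt0); rewrite ?nnegrE ?ltW //.
have := etrans (esym E1) (etrans e13 E3); rewrite -e13.
move/(scaled_div_eq_cross a_neq0 (lt0r_neq0 (shift_gt0 y1_gt0))
        (lt0r_neq0 (mulr_gt0 (shift_gt0 y2_gt0) y1_gt0)))/esym.
by apply: (eq_of_subr_mul_pos (mulr_gt0 (affine_gt0 y1_gt0) y1_gt0)); ring.
Qed.

Lemma IV_eq23 : x2 = x3 -> x1 = x2.
Proof.
case: system => _ E2 E3 e23; apply: (pexpIrn k_gt0); rewrite ?nnegrE ?ltW //.
have := etrans (esym E2) (etrans e23 E3); rewrite -e23.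
move/(scaled_div_eq_cross a_neq0 (lt0r_neq0 (mulr_gt0 (shift_gt0 y2_gt0) y1_gt0))
        (lt0r_neq0 (mulr_gt0 (shift_gt0 y2_gt0) y2_gt0)))/esym.
have c_gt0 : 0 < (x1 ^+ k + x2 ^+ k) * (b * x2 ^+ k + 1) * (x2 ^+ k + b).
  by rewrite mulr_gt0 ?shift_gt0 // mulr_gt0 ?affine_gt0 // addr_gt0.
by apply: (eq_of_subr_mul_pos c_gt0); ring.
Qed.

End IsingVannimenus.

Theorem proposition4p1 (R : realFieldType) (k : nat) (a b x1 x2 x3 : R) :
  (1 <= k)%N -> 0 < a -> 0 < b ->
  0 < x1 -> 0 < x2 -> 0 < x3 ->
  IV_system k a b x1 x2 x3 ->
  ((x1 = x2 /\ x2 = x3) <-> (x1 = x2 \/ x1 = x3 \/ x2 = x3)).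
Proof.
move=> k_gt0 a_gt0 b_gt0 x1_gt0 x2_gt0 x3_gt0 system.
split=> [[-> ->]|]; first by left.
case=> [e12 | [e13 | e23]].
- have e13 := IV_eq12 k_gt0 a_gt0 b_gt0 x1_gt0 x3_gt0 system e12.
  by split; rewrite // -e12.
- have e12 := IV_eq13 k_gt0 a_gt0 b_gt0 x1_gt0 x2_gt0 system e13.
  by split; rewrite // -e12.
- have e12 := IV_eq23 k_gt0 a_gt0 b_gt0 x1_gt0 x2_gt0 system e23.
  by split.
Qed.
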